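(* Let $\mathbb{X}$ be a set, $E\subset\mathbb{R}^{\mathbb{X}}$ a real vector subspace, $C=(E\cap[0,\infty)^{\mathbb{X}})\setminus\{0\}$, and $\Pi:E\to E/\mathcal{R}$ the canonical projection, where $f\mathcal{R}g$ iff $f=bg$ for some $b>0$. Let $\bar f\neq\bar g\in\Pi(C)$. Then: (1) there exist $f\in\bar f$, $g\in\bar g$ such that the intersection of the affine line through $f$ and $g$ with $C$ is a line segment $[u,v]$ with $u\neq v$. Fix such $f,g,u,v$. Then: (2) for any $h\in C$ lying in the vector plane spanned by $u$ and $v$ (equivalently by $f$ and $g$), the segment $[u,v]$ meets the vector line $\mathbb{R}h$ in a single point, which belongs to $C$; (3) for any $h\neq0$ in the vector plane spanned by $u,v$, writing $h=h_1u+h_2v$, one has $h\in C$ if and only if $h_1\ge0$ and $h_2\ge0$.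
   Context: Elements of $\Pi(C)$ are open half-lines $\{bf: b>0\}$, $f\in C$. *)

From Stdlib Require Import Reals.
Open Scope R_scope.

Definition fadd {X : Type} (f g : X -> R) : X -> R := fun x => f x + g x.
Definition fscal {X : Type} (a : R) (f : X -> R) : X -> R := fun x => a * f x.
Definition fzero {X : Type} : X -> R := fun _ => 0.

Definition is_subspace {X : Type} (E : (X -> R) -> Prop) : Prop :=
  E fzero /\
  (forall f g, E f -> E g -> E (fadd f g)) /\
  (forall a f, E f -> E (fscal a f)).

Definition cone {X : Type} (E : (X -> R) -> Prop) (f : X -> R) : Prop :=
  E f /\ (forall x, 0 <= f x) /\ f <> fzero.

Definition Rrel {X : Type} (f g : X -> R) : Prop :=
  exists b, 0 < b /\ f = fscal b g.

Definition Pi {X : Type} (f : X -> R) : (X -> R) -> Prop := fun h => Rrel h f.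

Definition aff_line {X : Type} (f g : X -> R) (h : X -> R) : Prop :=
  exists t, h = fadd (fscal (1 - t) f) (fscal t g).

Definition segment {X : Type} (u v : X -> R) (h : X -> R) : Prop :=
  exists s, 0 <= s <= 1 /\ h = fadd (fscal (1 - s) u) (fscal s v).

Definition span2 {X : Type} (u v : X -> R) (h : X -> R) : Prop :=
  exists a b, h = fadd (fscal a u) (fscal b v).

Definition vline {X : Type} (h : X -> R) (p : X -> R) : Prop :=
  exists l, p = fscal l h.

(* property (1) for f, g, u, v relative to the classes of f0, g0 *)
Definition good_config {X : Type} (E : (X -> R) -> Prop) (f0 g0 f g u v : X -> R) : Prop :=
  Pi f0 f /\ Pi g0 g /\
  (forall h, (aff_line f g h /\ cone E h) <-> segment u v h) /\
  u <> v.

(* Pick x, y with g0 x * f0 y < g0 y * f0 x (possible because g0 is not a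
   positive multiple of f0) and rescale f0 by the mediant
   (g0 x + g0 y) / (f0 x + f0 y): then g - f changes sign, so the line through
   f and g leaves the positive orthant on both sides and meets C in a segment
   [u, v].  If some h in C spanned by u and v had coordinates of sum <= 0, then
   h minus a multiple of u (or of v) would be a nonnegative multiple of v - u,
   and the line through u and v would stay in C beyond v (or before u).  Hence
   C meets the plane exactly in the cone over [u, v], and dividing h by the sum
   of its coordinates lands on the segment. *)

From Stdlib Require Import Reals Lra Psatz Classical FunctionalExtensionality PropExtensionality.
Open Scope R_scope.

Definition nonneg {X : Type} (f : X -> R) : Prop := forall x, 0 <= f x.

Definition lin_indep {X : Type} (u v : X -> R) : Prop :=
  forall a b, fadd (fscal a u) (fscal b v) = fzero -> a = 0 /\ b = 0.

Definition aff {X : Type} (f g : X -> R) (t : R) : X -> R :=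
  fadd (fscal (1 - t) f) (fscal t g).

Lemma Rdiv_nonneg (a b : R) : 0 <= a -> 0 < b -> 0 <= a / b.
Proof.
  intros Ha Hb. unfold Rdiv. apply Rmult_le_pos; [exact Ha | left; apply Rinv_0_lt_compat, Hb].
Qed.

Ltac fun_ring :=
  apply functional_extensionality; intro; cbv [aff fadd fscal fzero]; ring.

Ltac fun_field :=
  apply functional_extensionality; intro; cbv [aff fadd fscal fzero]; field.

Lemma nonzero_witness {X : Type} (f : X -> R) : f <> fzero -> exists x, f x <> 0.
Proof.
  intro Hf. apply NNPP; intro Hno. apply Hf, functional_extensionality; intro x.
  apply NNPP; intro Hx. apply Hno; exists x; exact Hx.
Qed.

Lemma subspace_lc {X : Type} (E : (X -> R) -> Prop) (a b : R) (u v : X -> R) :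
  is_subspace E -> E u -> E v -> E (fadd (fscal a u) (fscal b v)).
Proof. intros [_ [Hadd Hscal]] Hu Hv. apply Hadd; apply Hscal; assumption. Qed.

Lemma cone_scal {X : Type} (E : (X -> R) -> Prop) (c : R) (f : X -> R) :
  is_subspace E -> 0 < c -> cone E f -> cone E (fscal c f).
Proof.
  intros [_ [_ Hscal]] Hc [Ef [Hf Hf0]]. split; [|split].
  - apply Hscal, Ef.
  - intro x. unfold fscal. specialize (Hf x). nra.
  - intro H0. apply Hf0, functional_extensionality; intro x.
    pose proof (equal_f H0 x) as Hx. cbv [fscal fzero] in *.
    destruct (Rmult_integral _ _ Hx); [lra | assumption].
Qed.

Lemma cone_aff {X : Type} (E : (X -> R) -> Prop) (u v : X -> R) (s : R) :
  is_subspace E -> cone E u -> cone E v -> 0 <= s <= 1 -> cone E (aff u v s).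
Proof.
  intros HE [Eu [Hu Hu0]] [Ev [Hv Hv0]] Hs. split; [|split].
  - unfold aff. apply subspace_lc; assumption.
  - intro x. cbv [aff fadd fscal]. specialize (Hu x). specialize (Hv x). nra.
  - intro H0.
    destruct (nonzero_witness u Hu0) as [x Hx], (nonzero_witness v Hv0) as [y Hy].
    pose proof (equal_f H0 x) as H0x. pose proof (equal_f H0 y) as H0y.
    cbv [aff fadd fscal fzero] in H0x, H0y.
    pose proof (Hu x). pose proof (Hu y). pose proof (Hv x). pose proof (Hv y).
    assert (Hux : (1 - s) * u x = 0) by nra.
    assert (Hvy : s * v y = 0) by nra.
    destruct (Rmult_integral _ _ Hux), (Rmult_integral _ _ Hvy); try contradiction.
    lra.
Qed.

Lemma Pi_scal {X : Type} (c : R) (f : X -> R) : 0 < c -> Pi (fscal c f) = Pi f.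
Proof.
  intro Hc. apply functional_extensionality; intro h. apply propositional_extensionality.
  unfold Pi, Rrel. split; intros [b [Hb ->]].
  - exists (b * c). split; [nra | fun_ring].
  - exists (b / c). split; [apply Rdiv_lt_0_compat; assumption | fun_field; lra].
Qed.

Lemma exists_cross {X : Type} (f g : X -> R) :
  nonneg f -> nonneg g -> f <> fzero -> g <> fzero -> Pi f <> Pi g ->
  exists x y, g x * f y < g y * f x.
Proof.
  intros Hf Hg Hf0 Hg0 Hfg. apply NNPP; intro Hno.
  assert (Hcross : forall x y, g x * f y = g y * f x).
  { intros x y. apply Rle_antisym; apply Rnot_lt_le; intro Hlt; apply Hno; eauto. }
  destruct (nonzero_witness f Hf0) as [x0 Hx0].
  assert (Hfx0 : 0 < f x0) by (specialize (Hf x0); lra).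
  assert (Hgc : g = fscal (g x0 / f x0) f).
  { apply functional_extensionality; intro y. unfold fscal.
    replace (g y) with (g y * f x0 / f x0) by (field; lra).
    rewrite <- (Hcross x0 y). field. lra. }
  assert (Hc : 0 <= g x0 / f x0) by (apply Rdiv_nonneg; [apply Hg | exact Hfx0]).
  destruct Hc as [Hc | Hc].
  - apply Hfg. rewrite Hgc, Pi_scal; [reflexivity | exact Hc].
  - apply Hg0. rewrite Hgc, <- Hc. fun_ring.
Qed.

Lemma lin_indep_of_cross {X : Type} (f g : X -> R) (x y : X) :
  g x * f y <> g y * f x -> lin_indep f g.
Proof.
  intros Hxy a b Hab.
  pose proof (equal_f Hab x) as Hx. pose proof (equal_f Hab y) as Hy.
  cbv [fadd fscal fzero] in Hx, Hy.
  assert (Ha : a * (g y * f x - g x * f y) = 0).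
  { transitivity (g y * (a * f x + b * g x) - g x * (a * f y + b * g y)); [ring|].
    rewrite Hx, Hy. ring. }
  assert (Hb : b * (g y * f x - g x * f y) = 0).
  { transitivity (f x * (a * f y + b * g y) - f y * (a * f x + b * g x)); [ring|].
    rewrite Hx, Hy. ring. }
  destruct (Rmult_integral _ _ Ha), (Rmult_integral _ _ Hb); split; lra.
Qed.

Lemma lin_indep_coef {X : Type} (u v : X -> R) (a b a' b' : R) :
  lin_indep u v ->
  fadd (fscal a u) (fscal b v) = fadd (fscal a' u) (fscal b' v) -> a = a' /\ b = b'.
Proof.
  intros Huv Heq. destruct (Huv (a - a') (b - b')) as [Ha Hb].
  - apply functional_extensionality; intro x. pose proof (equal_f Heq x) as Hx.
    cbv [fadd fscal fzero] in *. lra.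
  - split; lra.
Qed.

Lemma aff_aff {X : Type} (f g : X -> R) (a b s : R) :
  aff (aff f g a) (aff f g b) s = aff f g ((1 - s) * a + s * b).
Proof. fun_ring. Qed.

Lemma aff_nonzero {X : Type} (f g : X -> R) (t : R) :
  lin_indep f g -> aff f g t <> fzero.
Proof. intros Hfg H0. destruct (Hfg (1 - t) t H0). lra. Qed.

Lemma lin_indep_aff {X : Type} (f g : X -> R) (a b : R) :
  lin_indep f g -> a <> b -> lin_indep (aff f g a) (aff f g b).
Proof.
  intros Hfg Hab al be H0.
  destruct (Hfg (al * (1 - a) + be * (1 - b)) (al * a + be * b)) as [H1 H2].
  { rewrite <- H0. fun_ring. }
  assert (Hal : al * (a - b) = 0).
  { transitivity (al * a + be * b - b * (al * (1 - a) + be * (1 - b) + (al * a + be * b)));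
      [ring | rewrite H1, H2; ring]. }
  destruct (Rmult_integral _ _ Hal); [split; lra | lra].
Qed.

Section ConeOverSegment.

Context {X : Type} (E : (X -> R) -> Prop) (u v : X -> R).
Hypothesis HE : is_subspace E.
Hypothesis Cu : cone E u.
Hypothesis Cv : cone E v.
Hypothesis Huv : lin_indep u v.
Hypothesis Hline : forall t, cone E (aff u v t) -> 0 <= t <= 1.

Lemma no_ray_along_line (c : R) : nonneg (fadd (fscal (- c) u) (fscal c v)) -> c = 0.
Proof.
  intro Hw. destruct Cu as [Eu [Hu _]], Cv as [Ev [Hv _]].
  assert (Hray : forall t, 0 <= t * c -> c <> 0 -> cone E (aff u v t)).
  { intros t Htc Hc. split; [|split].
    - unfold aff. apply subspace_lc; assumption.
    - intro x. specialize (Hw x). specialize (Hu x). cbv [aff fadd fscal] in *.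
      assert (Hsq : 0 <= c * c * (t * (v x - u x))).
      { replace (c * c * (t * (v x - u x))) with ((t * c) * (- c * u x + c * v x))
          by ring.
        apply Rmult_le_pos; assumption. }
      assert (0 < c * c) by nra. nra.
    - apply aff_nonzero, Huv. }
  destruct (Rtotal_order c 0) as [Hc | [Hc | Hc]]; [| exact Hc |].
  - assert (H := Hline (-1) (Hray (-1) ltac:(nra) ltac:(lra))). lra.
  - assert (H := Hline 2 (Hray 2 ltac:(nra) ltac:(lra))). lra.
Qed.

Lemma cone_lc_iff (h1 h2 : R) :
  fadd (fscal h1 u) (fscal h2 v) <> fzero ->
  (cone E (fadd (fscal h1 u) (fscal h2 v)) <-> 0 <= h1 /\ 0 <= h2).
Proof.
  intro Hnz. split.
  - intro Ch. destruct (Rlt_or_le 0 (h1 + h2)) as [Hs | Hs].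
    + assert (Hnorm : aff u v (h2 / (h1 + h2))
                      = fscal (/ (h1 + h2)) (fadd (fscal h1 u) (fscal h2 v))).
      { fun_field. lra. }
      assert (Cnorm : cone E (aff u v (h2 / (h1 + h2)))).
      { rewrite Hnorm. apply cone_scal; [exact HE | apply Rinv_0_lt_compat, Hs | exact Ch]. }
      destruct (Hline _ Cnorm) as [H0 H1].
      assert (Hdiv : h2 / (h1 + h2) * (h1 + h2) = h2) by (field; lra).
      split; nra.
    + exfalso. destruct Ch as [_ [Hh _]].
      destruct Cu as [_ [Hu _]], Cv as [_ [Hv _]].
      (* h - (h1 + h2) u = h2 (v - u) and h - (h1 + h2) v = - h1 (v - u) are nonnegative *)
      assert (H2 : h2 = 0).
      { apply no_ray_along_line. intro x.
        specialize (Hh x). specialize (Hu x). cbv [fadd fscal] in *. nra. }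
      assert (H1 : - h1 = 0).
      { apply no_ray_along_line. intro x.
        specialize (Hh x). specialize (Hv x). cbv [fadd fscal] in *. nra. }
      apply Hnz. replace h1 with 0 by lra. subst h2. fun_ring.
  - intros [H1 H2]. destruct Cu as [Eu [Hu _]], Cv as [Ev [Hv _]].
    split; [|split].
    + apply subspace_lc; assumption.
    + intro x. specialize (Hu x). specialize (Hv x). cbv [fadd fscal]. nra.
    + exact Hnz.
Qed.

Lemma segment_meets_vline (h : X -> R) :
  cone E h -> span2 u v h ->
  exists p, (segment u v p /\ vline h p) /\
            (forall q, segment u v q /\ vline h q -> q = p) /\
            cone E p.
Proof.
  intros Ch [a [b ->]].
  pose proof (proj2 (proj2 Ch)) as Hnz.
  destruct (proj1 (cone_lc_iff a b Hnz) Ch) as [Ha Hb].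
  assert (Hs : 0 < a + b).
  { destruct (Rle_lt_or_eq_dec 0 (a + b)) as [Hs | Hs]; [lra | exact Hs |].
    exfalso. apply Hnz. replace a with 0 by lra. replace b with 0 by lra. fun_ring. }
  assert (Hp : aff u v (b / (a + b)) = fscal (/ (a + b)) (fadd (fscal a u) (fscal b v))).
  { fun_field. lra. }
  assert (Hbs : 0 <= b / (a + b) <= 1).
  { split; [apply Rdiv_nonneg; lra |].
    apply (Rmult_le_reg_r (a + b)); [exact Hs |]. field_simplify; lra. }
  exists (aff u v (b / (a + b))). split; [split | split].
  - exists (b / (a + b)). split; [exact Hbs | reflexivity].
  - exists (/ (a + b)). exact Hp.
  - intros q [[s [_ ->]] [l Hl]].
    destruct (lin_indep_coef u v (1 - s) s (l * a) (l * b) Huv) as [E1 E2].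
    { rewrite Hl. fun_ring. }
    assert (Hl' : l = / (a + b)).
    { apply (Rmult_eq_reg_r (a + b)); [| lra]. field_simplify; lra. }
    rewrite Hl, Hp, Hl'. reflexivity.
  - apply cone_aff; assumption.
Qed.

End ConeOverSegment.

Lemma good_config_line {X : Type} (E : (X -> R) -> Prop) (f0 g0 f g u v : X -> R) :
  is_subspace E -> cone E f0 -> cone E g0 -> Pi f0 <> Pi g0 ->
  good_config E f0 g0 f g u v ->
  cone E u /\ cone E v /\ lin_indep u v /\ (forall t, cone E (aff u v t) -> 0 <= t <= 1).
Proof.
  intros HE Cf0 Cg0 Hne [[b [Hb ->]] [[b' [Hb' ->]] [Hiff Huv]]].
  set (f := fscal b f0). set (g := fscal b' g0).
  assert (Hfg : lin_indep f g).
  { destruct (cone_scal E b f0 HE Hb Cf0) as [_ [Hf Hf0]].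
    destruct (cone_scal E b' g0 HE Hb' Cg0) as [_ [Hg Hg0]].
    destruct (exists_cross f g Hf Hg Hf0 Hg0) as [x [y Hxy]].
    - unfold f, g. rewrite !Pi_scal; assumption.
    - apply (lin_indep_of_cross f g x y). lra. }
  assert (Su : segment u v u) by (exists 0; split; [lra | fun_ring]).
  assert (Sv : segment u v v) by (exists 1; split; [lra | fun_ring]).
  apply Hiff in Su as [[a0 Ha0] Cu]. apply Hiff in Sv as [[b0 Hb0] Cv].
  change (u = aff f g a0) in Ha0. change (v = aff f g b0) in Hb0.
  assert (Hab : a0 <> b0) by (intro Hab; apply Huv; rewrite Ha0, Hb0, Hab; reflexivity).
  assert (Huv' : lin_indep u v) by (rewrite Ha0, Hb0; apply lin_indep_aff; assumption).
  split; [exact Cu | split; [exact Cv | split; [exact Huv' |]]].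
  intros t Ct.
  assert (Hseg : segment u v (aff u v t)).
  { apply Hiff. split; [| exact Ct].
    exists ((1 - t) * a0 + t * b0). rewrite Ha0, Hb0. apply aff_aff. }
  destruct Hseg as [s [Hs Heq]].
  destruct (lin_indep_coef u v (1 - t) t (1 - s) s Huv' Heq) as [_ ->]. exact Hs.
Qed.

Lemma max_nonneg_step {X : Type} (p q : X -> R) (x0 : X) :
  nonneg p -> q x0 < 0 ->
  exists b, nonneg (fun x => p x + b * q x) /\
            forall t, nonneg (fun x => p x + t * q x) -> t <= b.
Proof.
  intros Hp Hx0.
  set (S := fun t => nonneg (fun x => p x + t * q x)).
  assert (Hub : forall x, q x < 0 -> forall t, S t -> t <= - p x / q x).
  { intros x Hq t Ht. specialize (Ht x). cbv beta in Ht.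
    assert (- p x / q x * q x = - p x) by (field; lra). nra. }
  assert (HS0 : S 0) by (intro x; specialize (Hp x); cbv beta; lra).
  destruct (completeness S) as [b [Hb1 Hb2]].
  - exists (- p x0 / q x0). exact (Hub x0 Hx0).
  - exists 0. exact HS0.
  - exists b. split; [| exact Hb1].
    assert (Hb0 : 0 <= b) by (apply Hb1; exact HS0).
    intro x. cbv beta. apply Rnot_lt_le. intro Hlt.
    assert (Hq : q x < 0) by (specialize (Hp x); nra).
    assert (Hbw : b <= - p x / q x) by (apply Hb2; exact (Hub x Hq)).
    assert (- p x / q x * q x = - p x) by (field; lra). nra.
Qed.

Lemma nonneg_aff_interval {X : Type} (f g : X -> R) (x y : X) :
  nonneg f -> nonneg g -> g x < f x -> f y < g y ->
  exists a b, a < b /\ forall t, nonneg (aff f g t) <-> a <= t <= b.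
Proof.
  intros Hf Hg Hx Hy.
  assert (Haff : forall t z, aff f g t z = f z + t * (g z - f z))
    by (intros; cbv [aff fadd fscal]; ring).
  destruct (max_nonneg_step f (fun z => g z - f z) x Hf ltac:(lra)) as [b [Hb Hbmax]].
  destruct (max_nonneg_step f (fun z => f z - g z) y Hf ltac:(lra)) as [a [Ha Hamax]].
  cbv beta in Hb, Hbmax, Ha, Hamax.
  assert (H1b : 1 <= b) by (apply Hbmax; intro z; specialize (Hg z); lra).
  assert (H0a : 0 <= a) by (apply Hamax; intro z; specialize (Hf z); lra).
  exists (- a), b. split; [lra |]. intro t. split.
  - intro Ht. split.
    + enough (- t <= a) by lra. apply Hamax. intro z.
      specialize (Ht z). rewrite Haff in Ht. lra.
    + apply Hbmax. intro z. specialize (Ht z). rewrite Haff in Ht. exact Ht.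
  - intros [Hat Htb] z. rewrite Haff. specialize (Ha z). specialize (Hb z).
    destruct (Rle_or_lt 0 (g z - f z)); nra.
Qed.

Lemma exists_good_config {X : Type} (E : (X -> R) -> Prop) (f0 g0 : X -> R) :
  is_subspace E -> cone E f0 -> cone E g0 -> Pi f0 <> Pi g0 ->
  exists f g u v, good_config E f0 g0 f g u v.
Proof.
  intros HE Cf0 Cg0 Hne.
  pose proof Cf0 as [_ [Hf0 Nf0]]. pose proof Cg0 as [Eg0 [Hg0 Ng0]].
  destruct (exists_cross f0 g0 Hf0 Hg0 Nf0 Ng0 Hne) as [x [y Hxy]].
  pose proof (Hf0 x). pose proof (Hf0 y). pose proof (Hg0 x). pose proof (Hg0 y).
  assert (Hfx : 0 < f0 x) by nra.
  assert (Hgy : 0 < g0 y) by nra.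
  set (r := (g0 x + g0 y) / (f0 x + f0 y)).
  assert (Hr : 0 < r) by (apply Rdiv_lt_0_compat; lra).
  assert (Hrx : g0 x < r * f0 x).
  { apply (Rmult_lt_reg_r (f0 x + f0 y)); [lra |]. unfold r. field_simplify; nra. }
  assert (Hry : r * f0 y < g0 y).
  { apply (Rmult_lt_reg_r (f0 x + f0 y)); [lra |]. unfold r. field_simplify; nra. }
  set (f := fscal r f0).
  pose proof (cone_scal E r f0 HE Hr Cf0) as [Ef [Hf _]].
  assert (Hfg : lin_indep f g0).
  { apply (lin_indep_of_cross f g0 x y). unfold f, fscal. nra. }
  destruct (nonneg_aff_interval f g0 x y Hf Hg0 Hrx Hry) as [a [b [Hab Hint]]].
  assert (Hcone : forall t, a <= t <= b -> cone E (aff f g0 t)).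
  { intros t Ht. split; [unfold aff; apply subspace_lc; assumption |].
    split; [apply Hint, Ht | apply aff_nonzero, Hfg]. }
  exists f, g0, (aff f g0 a), (aff f g0 b). split; [| split; [| split]].
  - exists r. split; [exact Hr | reflexivity].
  - exists 1. split; [lra | fun_ring].
  - intro h. split.
    + intros [[t ->] Ch]. change (cone E (aff f g0 t)) in Ch.
      destruct (proj1 (Hint t) (proj1 (proj2 Ch))) as [Hat Htb].
      exists ((t - a) / (b - a)). split.
      * split; [apply Rdiv_nonneg; lra |].
        apply (Rmult_le_reg_r (b - a)); [lra |]. field_simplify; lra.
      * change (aff f g0 t = aff (aff f g0 a) (aff f g0 b) ((t - a) / (b - a))).
        rewrite aff_aff. f_equal. field. lra.
    + intros [s [Hs ->]]. change (aff_line f g0 (aff (aff f g0 a) (aff f g0 b) s)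
                                  /\ cone E (aff (aff f g0 a) (aff f g0 b) s)).
      rewrite aff_aff. split.
      * exists ((1 - s) * a + s * b). reflexivity.
      * apply Hcone. nra.
  - intro Heq. destruct (lin_indep_coef f g0 (1 - a) a (1 - b) b Hfg Heq). lra.
Qed.

Theorem mainTheorem3 (X : Type) (E : (X -> R) -> Prop) (f0 g0 : X -> R) :
  is_subspace E -> cone E f0 -> cone E g0 -> Pi f0 <> Pi g0 ->
  (exists f g u v, good_config E f0 g0 f g u v) /\
  (forall f g u v, good_config E f0 g0 f g u v ->
     (forall h, cone E h -> span2 u v h ->
        exists p, (segment u v p /\ vline h p) /\
                  (forall q, segment u v q /\ vline h q -> q = p) /\
                  cone E p) /\
     (forall h1 h2, fadd (fscal h1 u) (fscal h2 v) <> fzero ->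
        (cone E (fadd (fscal h1 u) (fscal h2 v)) <-> 0 <= h1 /\ 0 <= h2))).
Proof.
  intros HE Cf0 Cg0 Hne. split.
  - exact (exists_good_config E f0 g0 HE Cf0 Cg0 Hne).
  - intros f g u v Hcfg.
    destruct (good_config_line E f0 g0 f g u v HE Cf0 Cg0 Hne Hcfg)
      as [Cu [Cv [Huv Hline]]].
    split.
    + exact (segment_meets_vline E u v HE Cu Cv Huv Hline).
    + exact (cone_lc_iff E u v HE Cu Cv Huv Hline).
Qed.
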